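(* Let $U\in C^{3}(\mathbb{R}^{d})$ be a Morse function with finitely many critical points satisfying the growth conditions in the context, and let $\boldsymbol{\ell}$ be a smooth vector field with $\nabla U\cdot\boldsymbol{\ell}\equiv0$. For $\epsilon>0$ let $\mathscr{L}_{\epsilon}f=-(\nabla U+\boldsymbol{\ell})\cdot\nabla f+\epsilon\Delta f$. Then for every $\epsilon>0$ there exists $r_{0}=r_{0}(\epsilon)>0$ such that $(\mathscr{L}_{\epsilon}U)(\boldsymbol{x})\le-3$ for all $\boldsymbol{x}\notin\mathcal{D}_{r_{0}}(\boldsymbol{0})$, where $\mathcal{D}_{r}(\boldsymbol{0})$ is the open ball of radius $r$ centered at the origin.
   Context: Growth conditions: $\lim_{n\to\infty}\inf_{|\boldsymbol{x}|\ge n}U(\boldsymbol{x})/|\boldsymbol{x}|=\infty$, $\lim_{|\boldsymbol{x}|\to\infty}\frac{\boldsymbol{x}}{|\boldsymbol{x}|}\cdot\nabla U(\boldsymbol{x})=\infty$, $\lim_{|\boldsymbol{x}|\to\infty}\{|\nabla U(\boldsymbol{x})|-2\Delta U(\boldsymbol{x})\}=\infty$. *)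

From HB Require Import structures.
From mathcomp Require Import all_boot all_order all_algebra.
From mathcomp Require Import all_classical all_reals all_analysis.
Set Implicit Arguments. Unset Strict Implicit. Unset Printing Implicit Defensive.
Import Order.TTheory GRing.Theory Num.Theory.
Import numFieldNormedType.Exports.
Local Open Scope classical_set_scope.
Local Open Scope ring_scope.

Section Defs.
Variables (R : realType) (d : nat).
Notation V := 'rV[R]_d.

Definition ebasis (i : 'I_d) : V := \row_(j < d) (i == j)%:R.

Definition edot (u v : V) : R := \sum_(i < d) u ord0 i * v ord0 i.
Definition enorm (x : V) : R := Num.sqrt (edot x x).

Definition open_disc0 (r : R) : set V := [set x | enorm x < r].

Definition partial (i : 'I_d) (f : V -> R) : V -> R :=
  fun x => 'D_(ebasis i) f x.

Fixpoint iter_partial (s : seq 'I_d) (f : V -> R) : V -> R :=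
  match s with
  | [::] => f
  | i :: s' => partial i (iter_partial s' f)
  end.

Definition isCk (k : nat) (f : V -> R) : Prop :=
  forall s : seq 'I_d, (size s <= k)%N ->
    continuous (iter_partial s f) /\
    ((size s < k)%N -> forall (i : 'I_d) (x : V),
        derivable (iter_partial s f) x (ebasis i)).

Definition smooth (f : V -> R) : Prop := forall k, isCk k f.

Definition smooth_field (l : V -> V) : Prop :=
  forall i : 'I_d, smooth (fun x => l x ord0 i).

Definition grad (f : V -> R) (x : V) : V := \row_(i < d) partial i f x.
Definition laplacian (f : V -> R) (x : V) : R :=
  \sum_(i < d) partial i (partial i f) x.
Definition hessian (f : V -> R) (x : V) : 'M[R]_d :=
  \matrix_(i < d, j < d) partial i (partial j f) x.

Definition critical_point (f : V -> R) (x : V) : Prop := grad f x = 0.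

Definition morse (f : V -> R) : Prop :=
  forall x, critical_point f x -> \det (hessian f x) != 0.

Definition to_pinfty_at_infty (g : V -> R) : Prop :=
  forall M : R, exists r : R, forall x, r <= enorm x -> M <= g x.

(* lim_{n -> oo} inf_{|x| >= n} U(x)/|x| = oo, unfolded *)
Definition superlinear (U : V -> R) : Prop :=
  forall M : R, exists n : nat, forall x, n%:R <= enorm x -> M <= U x / enorm x.

Definition gen (U : V -> R) (l : V -> V) (eps : R) (f : V -> R) (x : V) : R :=
  - edot (grad U x + l x) (grad f x) + eps * laplacian f x.

End Defs.

From HB Require Import structures.
From mathcomp Require Import all_boot all_order all_algebra.
From mathcomp Require Import all_classical all_reals all_analysis.
From mathcomp Require Import ring lra.
Set Implicit Arguments. Unset Strict Implicit. Unset Printing Implicit Defensive.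
Import Order.TTheory GRing.Theory Num.Theory.
Import numFieldNormedType.Exports.
Local Open Scope classical_set_scope.
Local Open Scope ring_scope.

(* Orthogonality kills the drift term of l, so that
   L_eps U = - |grad U|^2 + eps Delta U.  Far away,
   eps (|grad U| - 2 Delta U) >= 6 + eps^2/8, i.e.
   eps Delta U <= eps |grad U| / 2 - 3 - eps^2/16, and then
   L_eps U <= - (|grad U| - eps/4)^2 - 3 <= -3. *)

Section Euclidean.
Variables (R : realType) (d : nat).
Implicit Types u v w : 'rV[R]_d.

Lemma edotDl u v w : edot (u + v) w = edot u w + edot v w.
Proof. by rewrite /edot -big_split; apply: eq_bigr => i _; rewrite mxE mulrDl. Qed.

Lemma edotC u v : edot u v = edot v u.
Proof. by apply: eq_bigr => i _; rewrite mulrC. Qed.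

Lemma edotxx_ge0 u : 0 <= edot u u.
Proof. by apply: sumr_ge0 => i _; rewrite -expr2 sqr_ge0. Qed.

Lemma enorm_sqr u : enorm u ^+ 2 = edot u u.
Proof. by rewrite sqr_sqrtr // edotxx_ge0. Qed.

Lemma to_pinfty_at_infty_outside_disc (g : 'rV[R]_d -> R) (M : R) :
  to_pinfty_at_infty g ->
  exists r0 : R, 0 < r0 /\ forall x, ~ open_disc0 r0 x -> M <= g x.
Proof.
move=> /(_ M) [r gM]; exists (Num.max r 1); split; first by rewrite lt_max ltr01 orbT.
move=> x /negP; rewrite -leNgt ge_max => /andP[rx _].
exact: gM.
Qed.

End Euclidean.

Lemma gen_self_orthogonal (R : realType) (d : nat) (U : 'rV[R]_d -> R)
    (l : 'rV[R]_d -> 'rV[R]_d) (eps : R) (x : 'rV[R]_d) :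
  edot (grad U x) (l x) = 0 ->
  gen U l eps U x = - enorm (grad U x) ^+ 2 + eps * laplacian U x.
Proof. by move=> Ul; rewrite /gen edotDl (edotC (l x)) Ul addr0 enorm_sqr. Qed.

Lemma opp_sqr_addr_le (R : realFieldType) (eps t D c : R) :
  2 * c + eps ^+ 2 / 8 <= eps * (t - 2 * D) -> - t ^+ 2 + eps * D <= - c.
Proof.
move=> growth.
have square : (t - eps / 4) ^+ 2 = t ^+ 2 - eps * t / 2 + eps ^+ 2 / 16 by field.
have := sqr_ge0 (t - eps / 4); rewrite square.
have expand : eps * (t - 2 * D) = eps * t - 2 * (eps * D) by ring.
by move: growth; rewrite expand; lra.
Qed.

Theorem lemma5p1 (R : realType) (d : nat) (U : 'rV[R]_d -> R)
    (l : 'rV[R]_d -> 'rV[R]_d) :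
  isCk 3 U ->
  morse U ->
  finite_set [set x | critical_point U x] ->
  superlinear U ->
  to_pinfty_at_infty (fun x => edot ((enorm x)^-1 *: x) (grad U x)) ->
  to_pinfty_at_infty (fun x => enorm (grad U x) - 2 * laplacian U x) ->
  smooth_field l ->
  (forall x, edot (grad U x) (l x) = 0) ->
  forall eps : R, 0 < eps ->
    exists r0 : R, 0 < r0 /\
      forall x, ~ open_disc0 r0 x -> gen U l eps U x <= -3.
Proof.
move=> _ _ _ _ _ growth _ orth eps eps_gt0.
have [r0 [r0_gt0 far]] :=
  to_pinfty_at_infty_outside_disc ((2 * 3 + eps ^+ 2 / 8) / eps) growth.
exists r0; split => // x /far /= farx.
rewrite gen_self_orthogonal //; apply: opp_sqr_addr_le.
by move: farx; rewrite ler_pdivrMr // [_ * eps]mulrC.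
Qed.
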